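(* Every endotactic reaction network is consistent.
   Context: A reaction network (E-graph) $\mathcal{G}=(\mathcal{V},\mathcal{E})$ is a finite directed graph whose nodes are distinct elements of a finite set $Y\subset\mathbb{R}^d_{\ge 0}$, with $\mathcal{V}\neq\emptyset$, every node incident to at least one edge, and no edge from a node to itself. For an edge $e$, $\mathbf{s}(e)$ is its source node, $\mathbf{t}(e)$ its target, $\mathbf{v}(e)=\mathbf{t}(e)-\mathbf{s}(e)$. $\mathcal{G}$ is consistent if there exist $a_e>0$, $e\in\mathcal{E}$, with $\sum_{e\in\mathcal{E}}a_e\mathbf{v}(e)=\mathbf{0}$. $\mathcal{G}$ is endotactic if for every $\mathbf{w}\in\mathbb{R}^d$ and $e_i\in\mathcal{E}$ with $\mathbf{w}\cdot\mathbf{v}(e_i)<0$ there exists $e_j\in\mathcal{E}$ with $\mathbf{w}\cdot(\mathbf{s}(e_j)-\mathbf{s}(e_i))<0$ and $\mathbf{w}\cdot\mathbf{v}(e_j)>0$. *)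

From mathcomp Require Import all_boot all_order all_algebra.
Set Implicit Arguments. Unset Strict Implicit. Unset Printing Implicit Defensive.
Import Order.TTheory GRing.Theory Num.Theory.
Local Open Scope ring_scope.

Definition dotv (R : realFieldType) (d : nat) (w x : 'rV[R]_d) : R :=
  \sum_(i < d) w ord0 i * x ord0 i.

Definition src (R : realFieldType) (d : nat) (e : 'rV[R]_d * 'rV[R]_d) := e.1.
Definition tgt (R : realFieldType) (d : nat) (e : 'rV[R]_d * 'rV[R]_d) := e.2.
Definition rvec (R : realFieldType) (d : nat) (e : 'rV[R]_d * 'rV[R]_d) :=
  e.2 - e.1.

Definition is_egraph (R : realFieldType) (d : nat)
    (V : seq 'rV[R]_d) (E : seq ('rV[R]_d * 'rV[R]_d)) : Prop :=
  [/\ V != [::], uniq V & uniq E] /\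
  [/\ (forall y, y \in V -> forall i, 0 <= y ord0 i),
      (forall e, e \in E -> (src e \in V) && (tgt e \in V)),
      (forall e, e \in E -> src e != tgt e) &
      (forall y, y \in V -> exists2 e, e \in E & (src e == y) || (tgt e == y))].

Definition consistent (R : realFieldType) (d : nat)
    (E : seq ('rV[R]_d * 'rV[R]_d)) : Prop :=
  exists a : 'rV[R]_d * 'rV[R]_d -> R,
    (forall e, e \in E -> 0 < a e) /\ \sum_(e <- E) a e *: rvec e = 0.

Definition endotactic (R : realFieldType) (d : nat)
    (E : seq ('rV[R]_d * 'rV[R]_d)) : Prop :=
  forall (w : 'rV[R]_d) ei, ei \in E -> dotv w (rvec ei) < 0 ->
    exists2 ej, ej \in E &
      (dotv w (src ej - src ei) < 0) /\ (0 < dotv w (rvec ej)).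

From HB Require Import structures.
From mathcomp Require Import all_boot all_order all_algebra.
From mathcomp Require Import ring.
Set Implicit Arguments. Unset Strict Implicit. Unset Printing Implicit Defensive.
Import Order.TTheory GRing.Theory Num.Theory.
Local Open Scope ring_scope.

(** If an edge [e] has [w . v(e) > 0], endotacticity applied to [-w] yields an
    edge [e'] with [w . v(e') < 0]; so no linear functional is nonnegative on
    every reaction vector without vanishing on all of them.  By Stiemke's
    transposition theorem the reaction vectors then admit a vanishing
    combination with strictly positive coefficients, which is consistency.
    Stiemke's theorem follows from Farkas' lemma applied to each [-v(e)], and
    Farkas' lemma is proved by induction on the number of generators: when the
    separating functional [w] of the smaller problem is negative on the new
    generator [a], project everything along [a] onto [ker w] and recurse. *)

Section DotProduct.
Variables (R : realFieldType) (d : nat).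
Implicit Types (w u x : 'rV[R]_d).

Lemma dotvC w x : dotv w x = dotv x w.
Proof. by apply: eq_bigr => i _; rewrite mulrC. Qed.

Fact dotv_is_scalar w : scalar (dotv w).
Proof.
move=> k x u; rewrite /dotv mulr_sumr -big_split; apply: eq_bigr => i _ /=.
by rewrite !mxE mulrDr mulrCA.
Qed.

HB.instance Definition _ w :=
  GRing.isLinear.Build R 'rV[R]_d R *%R (dotv w) (dotv_is_scalar w).

Lemma dotvNl w u : dotv (- w) u = - dotv w u.
Proof. by rewrite dotvC linearN /= dotvC. Qed.

Lemma dotvBZl w w' c u : dotv (w - c *: w') u = dotv w u - c * dotv w' u.
Proof. by rewrite dotvC linearB linearZ /= !(dotvC u). Qed.

Lemma dotvv_gt0 u : u != 0 -> 0 < dotv u u.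
Proof.
move=> u_neq0; have sq_ge0 (i : 'I_d) : true -> 0 <= u ord0 i * u ord0 i.
  by move=> _; rewrite -expr2 sqr_ge0.
rewrite lt_def sumr_ge0 // andbT; apply: contra u_neq0 => /eqP uu0.
apply/eqP/rowP => i; rewrite mxE.
have /eqP := psumr_eq0P sq_ge0 uu0 (i := i) isT.
by rewrite mulf_eq0 orbb => /eqP.
Qed.

End DotProduct.

Section Pivot.
Variables (R : realFieldType) (d : nat) (w a : 'rV[R]_d).

Definition pivot (u : 'rV[R]_d) : 'rV[R]_d := u - (dotv w u / dotv w a) *: a.

Fact pivot_is_linear : linear pivot.
Proof.
move=> k u u'; rewrite /pivot linearP /= mulrDl scalerDl -mulrA -scalerA.
by rewrite scalerBr opprD addrACA.
Qed.

HB.instance Definition _ :=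
  GRing.isLinear.Build R 'rV[R]_d 'rV[R]_d *:%R pivot pivot_is_linear.

Lemma pivotE u : u = pivot u + (dotv w u / dotv w a) *: a.
Proof. by rewrite subrK. Qed.

Lemma pivot_self : dotv w a != 0 -> pivot a = 0.
Proof. by move=> wa_neq0; rewrite /pivot divff // scale1r subrr. Qed.

Lemma dotv_pivot w' u :
  dotv w' (pivot u) = dotv (w' - (dotv w' a / dotv w a) *: w) u.
Proof. by rewrite linearB linearZ /= dotvBZl; congr (_ - _); ring. Qed.

End Pivot.

Definition in_cone (R : realFieldType) (d : nat) (T : eqType) (s : seq T)
    (v : T -> 'rV[R]_d) (b : 'rV[R]_d) : Prop :=
  exists2 l : T -> R, {in s, forall x, 0 <= l x} & b = \sum_(x <- s) l x *: v x.

Definition separating (R : realFieldType) (d : nat) (T : eqType) (s : seq T)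
    (v : T -> 'rV[R]_d) (b w : 'rV[R]_d) : Prop :=
  {in s, forall x, 0 <= dotv w (v x)} /\ dotv w b < 0.

Section Farkas.
Variables (R : realFieldType) (d : nat) (T : eqType).
Implicit Types (v : T -> 'rV[R]_d) (b u w : 'rV[R]_d) (s : seq T).

Lemma in_cone_cons v x s c u :
  x \notin s -> 0 <= c -> in_cone s v u -> in_cone (x :: s) v (c *: v x + u).
Proof.
move=> xNs c_ge0 [l l_ge0 ->]; exists (fun y => if y == x then c else l y).
  by move=> y; rewrite inE; case: eqP => // _ /l_ge0.
rewrite big_cons eqxx; congr (_ + _); apply: eq_big_seq => y ys.
by case: eqP ys => // ->; rewrite (negbTE xNs).
Qed.

Lemma in_cone_unpivot v x s b w :
    x \notin s -> separating s v b w -> dotv w (v x) < 0 ->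
  in_cone s (pivot w (v x) \o v) (pivot w (v x) b) -> in_cone (x :: s) v b.
Proof.
move=> xNs [w_ge0 wb_lt0] wvx_lt0 [l l_ge0 Pb].
set u := \sum_(y <- s) l y *: v y.
have Pbu : pivot w (v x) b = pivot w (v x) u.
  by rewrite Pb linear_sum; apply: eq_bigr => y _; rewrite linearZ.
have wu_ge0 : 0 <= dotv w u.
  rewrite linear_sum big_seq sumr_ge0 // => y ys.
  by rewrite linearZ mulr_ge0 ?l_ge0 ?w_ge0.
set c := (dotv w b - dotv w u) / dotv w (v x).
have -> : b = c *: v x + u.
  rewrite [LHS](pivotE w (v x)) Pbu /pivot /c mulrBl scalerBl.
  by rewrite addrC addrA addrAC.
apply: in_cone_cons xNs _ _; last by exists l.
apply: mulr_le0; last by rewrite invr_le0 ltW.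
by rewrite subr_le0 (le_trans (ltW wb_lt0)).
Qed.

Lemma separating_unpivot v x s b w w' :
    dotv w (v x) != 0 ->
  separating s (pivot w (v x) \o v) (pivot w (v x) b) w' ->
  separating (x :: s) v b (w' - (dotv w' (v x) / dotv w (v x)) *: w).
Proof.
move=> wvx_neq0 [w'_ge0 w'b_lt0]; split; last by rewrite -dotv_pivot.
move=> y; rewrite inE -dotv_pivot => /predU1P[->|/w'_ge0 //].
by rewrite pivot_self // linear0.
Qed.

Lemma farkas v s b : uniq s -> in_cone s v b \/ exists w, separating s v b w.
Proof.
elim: s v b => [|x s IH] v b /=.
  move=> _; have [->|b_neq0] := eqVneq b 0; [left|right].
    by exists (fun=> 0) => //; rewrite big_nil.
  by exists (- b); split=> //; rewrite dotvNl oppr_lt0 dotvv_gt0.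
move=> /andP[xNs s_uniq]; have [b_cone|[w w_sep]] := IH v b s_uniq.
  by left; have := in_cone_cons xNs (lexx 0) b_cone; rewrite scale0r add0r.
have [wvx_ge0|wvx_lt0] := leP 0 (dotv w (v x)).
  right; exists w; case: w_sep => w_ge0 wb_lt0; split=> // y.
  by rewrite inE => /predU1P[->|/w_ge0].
have [Pb_cone|[w' w'_sep]] := IH (pivot w (v x) \o v) (pivot w (v x) b) s_uniq.
  by left; apply: in_cone_unpivot Pb_cone.
by right; eexists; apply: separating_unpivot w'_sep; rewrite lt_eqF.
Qed.

End Farkas.

Section Stiemke.
Variables (R : realFieldType) (d : nat) (T : eqType).
Variables (v : T -> 'rV[R]_d) (s : seq T).
Hypothesis s_uniq : uniq s.

Lemma sum_indicator_scale x :
  x \in s -> \sum_(y <- s) (y == x)%:R *: v y = v x :> 'rV[R]_d.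
Proof.
move=> xs; rewrite (eq_bigr (fun y => if y == x then v y else 0)); last first.
  by move=> y _; case: eqP => _; rewrite ?scale1r ?scale0r.
by rewrite -big_mkcond -big_filter filter_pred1_uniq // big_seq1.
Qed.

Lemma stiemke_at x :
    x \in s ->
    (forall w, 0 < dotv w (v x) -> exists2 y, y \in s & dotv w (v y) < 0) ->
  exists l : T -> R,
    [/\ {in s, forall y, 0 <= l y}, 0 < l x & \sum_(y <- s) l y *: v y = 0].
Proof.
move=> xs no_sep.
have [[l l_ge0 vx_eq]|[w [w_ge0 w_lt0]]] := farkas v (- v x) s_uniq.
  exists (fun y => l y + (y == x)%:R); split.
  - by move=> y ys; rewrite addr_ge0 ?l_ge0.
  - by rewrite eqxx ltr_wpDl ?l_ge0.
  by rewrite (eq_bigr _ (fun y _ => scalerDl _ _ _)) big_split /= -vx_eq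
       sum_indicator_scale // addNr.
have /no_sep[y ys] : 0 < dotv w (v x) by rewrite -oppr_lt0 -linearN.
by rewrite ltNge w_ge0.
Qed.

Lemma stiemke :
    (forall w x, x \in s -> 0 < dotv w (v x) ->
       exists2 y, y \in s & dotv w (v y) < 0) ->
  exists2 a : T -> R, {in s, forall x, 0 < a x} & \sum_(x <- s) a x *: v x = 0.
Proof.
move=> no_sep.
suff /(_ s) [|a [_ a_gt0 a0]] : forall t : seq T, {subset t <= s} ->
    exists a : T -> R, [/\ {in s, forall x, 0 <= a x}, {in t, forall x, 0 < a x}
      & \sum_(x <- s) a x *: v x = 0] by [|exists a].
elim=> [|x t IH] ts.
  exists (fun=> 0); split=> //.
  by rewrite big1 // => y _; rewrite scale0r.
have [|a [a_ge0 a_gt0 a0]] := IH; first by move=> y yt; apply/ts/mem_behead.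
have xs : x \in s by apply/ts/mem_head.
have [l [l_ge0 lx_gt0 l0]] := stiemke_at xs (fun w => no_sep w x xs).
exists (fun y => a y + l y); split.
- by move=> y ys; rewrite addr_ge0 ?a_ge0 ?l_ge0.
- move=> y; rewrite inE => /predU1P[->|yt]; first by rewrite ltr_wpDl ?a_ge0.
  by rewrite ltr_pwDl ?a_gt0 // l_ge0 //; apply/ts/mem_behead.
by rewrite (eq_bigr _ (fun y _ => scalerDl _ _ _)) big_split /= a0 l0 addr0.
Qed.

End Stiemke.

Lemma endotactic_sign_change (R : realFieldType) (d : nat)
    (E : seq ('rV[R]_d * 'rV[R]_d)) :
    endotactic E ->
  forall w e, e \in E -> 0 < dotv w (rvec e) ->
  exists2 e', e' \in E & dotv w (rvec e') < 0.
Proof.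
move=> endo w e eE wv_gt0.
have [|e' e'E [_ wv'_gt0]] := endo (- w) e eE; first by rewrite dotvNl oppr_lt0.
by exists e'; rewrite // -oppr_gt0 -dotvNl.
Qed.

Theorem lemma5 (R : realFieldType) (d : nat)
    (V : seq 'rV[R]_d) (E : seq ('rV[R]_d * 'rV[R]_d)) :
  is_egraph V E -> endotactic E -> consistent E.
Proof.
move=> [[_ _ E_uniq] _] endo.
have [a a_gt0 a0] := stiemke E_uniq (endotactic_sign_change endo).
by exists a.
Qed.
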